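(* Let $U$ be a VLA-J-SS. Let $U_1$ be the subspace spanned by all vectors $u_m(v_nw)-\varepsilon_{u,v}v_n(u_mw)-\sum_{i\ge0}\binom{m}{i}(u_iv)_{n+m-i}w$ with $u,v,w\in U$ homogeneous and $m,n\in\mathbb{N}$, and let $U_2$ be the subspace spanned by all vectors $$\sum_{i\ge0}(-1)^i\binom{k}{i}\big(u_{m+k-i}(v_{n+i}w)-\varepsilon_{u,v}(-1)^kv_{n+k-i}(u_{m+i}w)\big)-\sum_{i\ge0}\binom{m}{i}(u_{k+i}v)_{m+n-i}w$$ with $u,v,w\in U$ homogeneous and $k,m,n\in\mathbb{N}$. Then $U_1=U_2$.
   Context: All spaces over $\mathbb{C}$; $\mathbb{N}=\{0,1,2,\dots\}$; $\varepsilon_{u,v}=(-1)^{|u||v|}$. A VLA-J-SS is a $\mathbb{Z}_2$-graded space $U$ with an even linear operator $D$ and bilinear products $u_nv$ ($n\in\mathbb{N}$) such that for homogeneous $u,v$: $u_nv=0$ for $n$ large; $(Du)_nv=-nu_{n-1}v$ (read as $0$ for $n=0$); $D(u_nv)=(Du)_nv+u_n(Dv)$; $|u_nv|=|u|+|v|$. *)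

From HB Require Import structures.
From mathcomp Require Import all_boot all_order all_algebra.
Set Implicit Arguments. Unset Strict Implicit. Unset Printing Implicit Defensive.
Import Order.TTheory GRing.Theory Num.Theory.
Local Open Scope ring_scope.

(* Z2-grading of U: P false = even part, P true = odd part; both are
   subspaces and U is their direct sum. *)
Definition is_subspace (K : fieldType) (U : lmodType K) (S : U -> Prop) : Prop :=
  S 0 /\ (forall (a : K) (x y : U), S x -> S y -> S (a *: x + y)).

Definition Z2_grading (K : fieldType) (U : lmodType K) (P : bool -> U -> Prop) : Prop :=
  (forall b, is_subspace (P b)) /\
  (forall u : U, exists u0 u1, P false u0 /\ P true u1 /\ u = u0 + u1) /\
  (forall u : U, P false u -> P true u -> u = 0).

(* epsilon_{u,v} = (-1)^{|u||v|} for homogeneous u in P a, v in P b *)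
Definition eps (K : fieldType) (a b : bool) : K := (-1) ^+ (a && b).

(* VLA-J-SS structure on (U, P, D, prod) where prod n u v = u_n v. *)
Definition is_VLA_J_SS (K : fieldType) (U : lmodType K) (P : bool -> U -> Prop)
  (D : U -> U) (prod : nat -> U -> U -> U) : Prop :=
  Z2_grading P /\
  (forall (a : K) (x y : U), D (a *: x + y) = a *: D x + D y) /\
  (forall b u, P b u -> P b (D u)) /\
  (forall n (a : K) (x y z : U), prod n (a *: x + y) z = a *: prod n x z + prod n y z) /\
  (forall n (a : K) (x y z : U), prod n z (a *: x + y) = a *: prod n z x + prod n z y) /\
  (forall a b (u v : U), P a u -> P b v ->
     (exists N, forall n, (N <= n)%N -> prod n u v = 0) /\
     (forall n, prod n (D u) v = - (n%:R *: prod n.-1 u v)) /\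
     (forall n, D (prod n u v) = prod n (D u) v + prod n u (D v)) /\
     (forall n, P (a (+) b) (prod n u v))).

Definition in_span (K : fieldType) (U : lmodType K) (S : U -> Prop) (x : U) : Prop :=
  exists s : seq (K * U), (forall p, p \in s -> S p.2) /\
    x = \sum_(p <- s) p.1 *: p.2.

Definition gen1 (K : fieldType) (U : lmodType K) (P : bool -> U -> Prop)
  (prod : nat -> U -> U -> U) (x : U) : Prop :=
  exists a b c (u v w : U) (m n : nat), P a u /\ P b v /\ P c w /\
    x = prod m u (prod n v w) - eps K a b *: prod n v (prod m u w)
        - \sum_(i < m.+1) 'C(m, i)%:R *: prod (n + m - i)%N (prod i u v) w.

Definition gen2 (K : fieldType) (U : lmodType K) (P : bool -> U -> Prop)
  (prod : nat -> U -> U -> U) (x : U) : Prop :=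
  exists a b c (u v w : U) (k m n : nat), P a u /\ P b v /\ P c w /\
    x = \sum_(i < k.+1) ((-1) ^+ i * 'C(k, i)%:R) *:
           (prod (m + k - i)%N u (prod (n + i)%N v w)
            - (eps K a b * (-1) ^+ k) *: prod (n + k - i)%N v (prod (m + i)%N u w))
        - \sum_(i < m.+1) 'C(m, i)%:R *: prod (m + n - i)%N (prod (k + i)%N u v) w.

From mathcomp Require Import all_boot all_order all_algebra.
From mathcomp Require Import zify ring.
Set Implicit Arguments.
Unset Strict Implicit.
Unset Printing Implicit Defensive.
Import GRing.Theory.
Local Open Scope ring_scope.

(* A generator of U_1 is the generator of U_2 with k = 0.
   Conversely, the generator of U_2 with parameters (k, m, n) is the
   combination sum_i (-1)^i C(k, i) of the generators of U_1 with parameters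
   (m + k - i, n + i): reversing the order of summation matches the second
   terms, and the third terms collapse because
   sum_i (-1)^i C(k, i) C(m + k - i, l) = C(m, l - k) (zero for l < k), the
   k-th forward difference of j |-> C(j, l). *)

Section Span.
Variables (K : fieldType) (U : lmodType K).

Lemma in_span0 (S : U -> Prop) : in_span S 0.
Proof. by exists [::]; rewrite big_nil. Qed.

Lemma in_spanZD (S : U -> Prop) a y z :
  in_span S y -> in_span S z -> in_span S (a *: y + z).
Proof.
move=> [s1 [S_s1 ->]] [s2 [S_s2 ->]].
exists ([seq (a * p.1, p.2) | p <- s1] ++ s2); split.
  move=> p; rewrite mem_cat => /orP[/mapP[q q_s1 ->]|]; last exact: S_s2.
  exact: S_s1 _ q_s1.
rewrite big_cat big_map scaler_sumr; congr (_ + _).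
by apply: eq_bigr => p _; rewrite scalerA.
Qed.

Lemma in_span_gen (S : U -> Prop) y : S y -> in_span S y.
Proof.
move=> Sy; exists [:: (1, y)]; split; first by move=> p; rewrite inE => /eqP ->.
by rewrite big_seq1 scale1r.
Qed.

Lemma in_span_sum (S : U -> Prop) N (c : 'I_N -> K) (f : 'I_N -> U) :
  (forall i, in_span S (f i)) -> in_span S (\sum_(i < N) c i *: f i).
Proof.
move=> span_f; elim/big_rec: _ => [|i x _ span_x]; first exact: in_span0.
exact: in_spanZD.
Qed.

Lemma in_span_sub (S T : U -> Prop) :
  (forall y, S y -> in_span T y) -> forall x, in_span S x -> in_span T x.
Proof.
move=> sub_ST _ [s [S_s ->]]; elim: s S_s => [|p s IHs] S_s.
  by rewrite big_nil; exact: in_span0.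
rewrite big_cons; apply: in_spanZD; first by apply/sub_ST/S_s; rewrite inE eqxx.
by apply: IHs => q s_q; apply: S_s; rewrite inE s_q orbT.
Qed.

End Span.

Lemma signr_subn (R : pzRingType) i k :
  (i <= k)%N -> (-1) ^+ (k - i) = (-1) ^+ k * (-1) ^+ i :> R.
Proof.
move=> le_ik; rewrite -{2}(subnK le_ik) -exprD -addnA addnn -muln2.
by rewrite exprD exprM sqrr_sign mulr1.
Qed.

Section AlternatingBinomialSums.
Variable R : pzRingType.

Definition alt_binomial_sum (k : nat) (f : nat -> R) (m : nat) : R :=
  \sum_(i < k.+1) ((-1) ^+ i * 'C(k, i)%:R) * f (m + k - i)%N.

Lemma alt_binomial_sumS k f m :
  alt_binomial_sum k.+1 f m
  = alt_binomial_sum k f m.+1 - alt_binomial_sum k f m.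
Proof.
rewrite /alt_binomial_sum big_ord_recl expr0 mul1r bin0 subn0.
under eq_bigr => i _ do
  rewrite binS natrD mulrDr mulrDl exprS mulN1r !mulNr addnS subSS.
rewrite big_split /= !sumrN mul1r addrA; congr (_ - _).
rewrite [RHS]big_ord_recl expr0 mul1r bin0 subn0 addSn addnS.
rewrite big_ord_recr /= bin_small // mulr0 mul0r addr0 mul1r -sumrN.
congr (_ + _); apply: eq_bigr => i _.
by rewrite /bump /= add1n exprS mulN1r subSS !mulNr.
Qed.

Lemma alt_binomial_sum_bin k l m :
  alt_binomial_sum k (fun j => 'C(j, l)%:R) m
  = if (k <= l)%N then 'C(m, l - k)%:R else 0.
Proof.
elim: k m => [|k IHk] m.
  by rewrite /alt_binomial_sum big_ord1 expr0 mul1r bin0 mul1r addn0 !subn0.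
rewrite alt_binomial_sumS !IHk.
case: (ltngtP k l) => [lt_kl|_|<-]; last by rewrite subnn !bin0 subrr.
- have -> : (l - k = (l - k.+1).+1)%N by lia.
  by rewrite binS natrD addrAC subrr add0r.
- by rewrite subrr.
Qed.

End AlternatingBinomialSums.

Section AlternatingBinomialCombinations.
Variables (R : pzRingType) (V : lmodType R).

Lemma sum_alt_binomial_rev (f : nat -> V) k :
  \sum_(i < k.+1) ((-1) ^+ i * 'C(k, i)%:R) *: f (k - i)%N
  = (-1) ^+ k *: \sum_(i < k.+1) ((-1) ^+ i * 'C(k, i)%:R) *: f i.
Proof.
rewrite scaler_sumr (reindex_inj rev_ord_inj); apply: eq_bigr => i _ /=.
have le_ik : (i <= k)%N by rewrite -ltnS.
by rewrite subSS subKn // bin_sub // scalerA mulrA signr_subn.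
Qed.

Lemma sum_alt_binomial_shift (T : nat -> V) k m :
  \sum_(i < k.+1) ((-1) ^+ i * 'C(k, i)%:R) *:
     \sum_(l < (m + k - i).+1) 'C(m + k - i, l)%:R *: T l
  = \sum_(j < m.+1) 'C(m, j)%:R *: T (k + j)%N.
Proof.
have widen (i : 'I_k.+1) : \sum_(l < (m + k - i).+1) 'C(m + k - i, l)%:R *: T l
    = \sum_(l < k + m.+1) 'C(m + k - i, l)%:R *: T l.
  rewrite (big_ord_widen (k + m.+1) (fun l => 'C(m + k - i, l)%:R *: T l));
    last by lia.
  rewrite big_mkcond; apply: eq_bigr => l _.
  by case: ifP => // /negbT; rewrite -leqNgt => /bin_small ->; rewrite scale0r.
under eq_bigr => i _ do rewrite widen scaler_sumr.
rewrite exchange_big /=.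
under eq_bigr => l _ do
  rewrite (eq_bigr _ (fun i _ => scalerA _ _ _)) -scaler_suml
    -/(alt_binomial_sum k (fun j => 'C(j, l)%:R) m) alt_binomial_sum_bin.
rewrite big_split_ord /= big1 ?add0r => [|l _]; last first.
  by rewrite leqNgt ltn_ord scale0r.
by apply: eq_bigr => j _; rewrite leq_addr addKn.
Qed.

End AlternatingBinomialCombinations.

Section Defects.
Variables (R : comPzRingType) (V : lmodType R) (prod : nat -> V -> V -> V).
Variables (e : R) (u v w : V).

Definition commutator_defect m n : V :=
  prod m u (prod n v w) - e *: prod n v (prod m u w)
  - \sum_(i < m.+1) 'C(m, i)%:R *: prod (n + m - i)%N (prod i u v) w.

Definition borcherds_defect k m n : V :=
  \sum_(i < k.+1) ((-1) ^+ i * 'C(k, i)%:R) *: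
     (prod (m + k - i)%N u (prod (n + i)%N v w)
      - (e * (-1) ^+ k) *: prod (n + k - i)%N v (prod (m + i)%N u w))
  - \sum_(i < m.+1) 'C(m, i)%:R *: prod (m + n - i)%N (prod (k + i)%N u v) w.

Lemma borcherds_defect0 m n : borcherds_defect 0 m n = commutator_defect m n.
Proof.
rewrite /borcherds_defect big_ord1 expr0 mul1r scale1r mulr1 !addn0 !subn0.
by congr (_ - _); apply: eq_bigr => i _; rewrite add0n addnC.
Qed.

Lemma borcherds_defect_alt_sum k m n :
  borcherds_defect k m n
  = \sum_(i < k.+1) ((-1) ^+ i * 'C(k, i)%:R) *:
       commutator_defect (m + k - i) (n + i).
Proof.
pose T l := prod (n + m + k - l)%N (prod l u v) w.
have third_terms : \sum_(i < k.+1) ((-1) ^+ i * 'C(k, i)%:R) *: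
      \sum_(l < (m + k - i).+1) 'C(m + k - i, l)%:R *:
         prod (n + i + (m + k - i) - l)%N (prod l u v) w
    = \sum_(j < m.+1) 'C(m, j)%:R *: prod (m + n - j)%N (prod (k + j)%N u v) w.
  transitivity (\sum_(j < m.+1) 'C(m, j)%:R *: T (k + j)%N); last first.
    by apply: eq_bigr => j _; rewrite /T; congr (_ *: prod _ _ _); lia.
  rewrite -sum_alt_binomial_shift; apply: eq_bigr => i _; congr (_ *: _).
  apply: eq_bigr => l _; have := ltn_ord i => lt_ik.
  by rewrite /T; congr (_ *: prod _ _ _); lia.
have second_terms : \sum_(i < k.+1) ((-1) ^+ i * 'C(k, i)%:R) *:
      ((e * (-1) ^+ k) *: prod (n + k - i)%N v (prod (m + i)%N u w))
    = \sum_(i < k.+1) ((-1) ^+ i * 'C(k, i)%:R) *: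
      (e *: prod (n + i)%N v (prod (m + k - i)%N u w)).
  pose f j := e *: prod (n + j)%N v (prod (m + k - j)%N u w).
  transitivity ((-1) ^+ k *:
    \sum_(i < k.+1) ((-1) ^+ i * 'C(k, i)%:R) *: f (k - i)%N).
    rewrite scaler_sumr; apply: eq_bigr => i _; have := ltn_ord i => lt_ik.
    rewrite /f !scalerA; congr (_ *: prod _ _ (prod _ _ _)); [ring | lia | lia].
  by rewrite sum_alt_binomial_rev scalerA -expr2 sqrr_sign scale1r.
rewrite /commutator_defect /borcherds_defect -third_terms.
under eq_bigr => i _ do rewrite scalerDr scalerN.
under [RHS]eq_bigr => i _ do rewrite !scalerDr !scalerN.
by rewrite !big_split /= !sumrN second_terms.
Qed.

End Defects.

Theorem lemma6p4 (K : numClosedFieldType) (U : lmodType K)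
  (P : bool -> U -> Prop) (D : U -> U) (prod : nat -> U -> U -> U) :
  is_VLA_J_SS P D prod ->
  forall x : U, in_span (gen1 P prod) x <-> in_span (gen2 P prod) x.
Proof.
move=> _ x; split; apply: in_span_sub => y.
- move=> [a [b [c [u [v [w [m [n [Pa [Pb [Pc ->]]]]]]]]]]].
  apply: in_span_gen; exists a, b, c, u, v, w, 0%N, m, n; do 3!split => //.
  exact: esym (borcherds_defect0 prod (eps K a b) u v w m n).
- move=> [a [b [c [u [v [w [k [m [n [Pa [Pb [Pc ->]]]]]]]]]]]].
  change (in_span (gen1 P prod)
                  (borcherds_defect prod (eps K a b) u v w k m n)).
  rewrite borcherds_defect_alt_sum; apply: in_span_sum => i; apply: in_span_gen.
  by exists a, b, c, u, v, w, (m + k - i)%N, (n + i)%N.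
Qed.
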